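(* Let $E$ be a Banach $f$-algebra with order continuous norm and with a weak order unit $e$, and let $(x_\alpha)_{\alpha\in A}$ be a decreasing net in $E_+$. Then $x_\alpha\xrightarrow{mw}0$ if and only if $x_\alpha e\to0$ weakly.
   Context: All vector lattices are real and Archimedean. An $f$-algebra is a vector lattice with an associative multiplication making it an algebra, such that products of positive elements are positive and $x\wedge y=0$ implies $(xz)\wedge y=(zx)\wedge y=0$ for all $z\ge0$. A Banach $f$-algebra is an $f$-algebra which is a Banach lattice with $\|xy\|\le\|x\|\|y\|$. A net $(x_\alpha)$ in $E$ $mw$-converges to $x$ ($x_\alpha\xrightarrow{mw}x$) if $|x_\alpha-x|u\to0$ weakly for every $u\in E_+$. A weak order unit is an element $e>0$ whose generated band is all of $E$. *)

From HB Require Import structures.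
From mathcomp Require Import all_boot all_order all_algebra.
From mathcomp Require Import all_classical all_reals all_analysis.
Set Implicit Arguments. Unset Strict Implicit. Unset Printing Implicit Defensive.
Import Order.TTheory GRing.Theory Num.Theory.
Import numFieldNormedType.Exports.
Local Open Scope ring_scope.
Local Open Scope classical_set_scope.

Section Defs.
Variables (R : realType) (E : completeNormedModType R).
Variables (le : E -> E -> Prop) (join : E -> E -> E) (mul : E -> E -> E).

Definition meet (x y : E) : E := - join (- x) (- y).
Definition labs (x : E) : E := join x (- x).

Definition is_vector_lattice : Prop :=
  [/\ (forall x, le x x) /\
      (forall x y, le x y -> le y x -> x = y) /\
      (forall x y z, le x y -> le y z -> le x z),
      (forall x y z, le x y -> le (x + z) (y + z)),
      (forall (a : R) x y, 0 <= a -> le x y -> le (a *: x) (a *: y)) &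
      (forall x y z, [/\ le x (join x y), le y (join x y)
                     & (le x z -> le y z -> le (join x y) z)])].

Definition is_archimedean : Prop :=
  forall x y : E, le 0 x -> (forall n : nat, le (n%:R *: x) y) -> x = 0.

Definition is_f_algebra : Prop :=
  [/\ (forall x y z, mul (mul x y) z = mul x (mul y z)),
      (forall (a : R) x y z, mul (a *: x + y) z = a *: mul x z + mul y z),
      (forall (a : R) x y z, mul z (a *: x + y) = a *: mul z x + mul z y),
      (forall x y, le 0 x -> le 0 y -> le 0 (mul x y)) &
      (forall x y z, meet x y = 0 -> le 0 z ->
          meet (mul x z) y = 0 /\ meet (mul z x) y = 0)].

(* Banach f-algebra: complete (built into E), lattice norm, submultiplicative *)
Definition BanachFAlgebra : Prop :=
  [/\ is_vector_lattice, is_archimedean, is_f_algebra,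
      (forall x y, le (labs x) (labs y) -> `|x| <= `|y|) &
      (forall x y, `|mul x y| <= `|x| * `|y|)].

Definition directed (A : Type) (leA : A -> A -> Prop) : Prop :=
  [/\ inhabited A, (forall a, leA a a),
      (forall a b c, leA a b -> leA b c -> leA a c) &
      (forall a b, exists c, leA a c /\ leA b c)].

Definition net_cvg (A : Type) (leA : A -> A -> Prop) (u : A -> R) (l : R) :=
  forall eps : R, 0 < eps -> exists a0, forall a, leA a0 a -> `|u a - l| < eps.

Definition weak_cvg (A : Type) (leA : A -> A -> Prop) (x : A -> E) (l : E) :=
  forall f : E -> R,
    (forall (a : R) (y z : E), f (a *: y + z) = a * f y + f z) ->
    continuous f ->
    net_cvg leA (fun i => f (x i)) (f l).

Definition mw_cvg (A : Type) (leA : A -> A -> Prop) (x : A -> E) (l : E) :=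
  forall u, le 0 u -> weak_cvg leA (fun i => mul (labs (x i - l)) u) 0.

Definition decreasing_net (A : Type) (leA : A -> A -> Prop) (x : A -> E) :=
  forall a b, leA a b -> le (x b) (x a).

Definition net_decr_to_0 (A : Type) (leA : A -> A -> Prop) (x : A -> E) :=
  decreasing_net leA x /\
  (forall a, le 0 (x a)) /\
  (forall y, (forall a, le y (x a)) -> le y 0).

Definition order_continuous_norm : Prop :=
  forall (A : Type) (leA : A -> A -> Prop) (x : A -> E),
    directed leA -> net_decr_to_0 leA x -> net_cvg leA (fun a => `|x a|) 0.

Definition is_sup_of (D : set E) (s : E) :=
  (forall d, D d -> le d s) /\ (forall z, (forall d, D d -> le d z) -> le s z).

Definition is_band (B : set E) : Prop :=
  [/\ B 0, (forall (a : R) x y, B x -> B y -> B (a *: x + y)),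
      (forall x y, le (labs y) (labs x) -> B x -> B y) &
      (forall (D : set E) s, D `<=` B -> is_sup_of D s -> B s)].

(* e is a weak order unit: e > 0 and the band generated by e is E *)
Definition weak_order_unit (e : E) : Prop :=
  le 0 e /\ e <> 0 /\
  (forall B : set E, is_band B -> B e -> forall x, B x).

End Defs.

From Pilot Require Import Defs.
From HB Require Import structures.
From mathcomp Require Import all_boot all_order all_algebra.
From mathcomp Require Import all_classical all_reals all_analysis.
From mathcomp Require Import lra.
Import Order.TTheory GRing.Theory Num.Theory.
Import numFieldNormedType.Exports.
Local Open Scope ring_scope.

Set Implicit Arguments. Unset Strict Implicit. Unset Printing Implicit Defensive.

(* If [x_a e -> 0] weakly, the positive decreasing net [x_a e] has infimum 0,
   since a nonzero positive lower bound would be detected by a positive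
   continuous functional (Hahn-Banach with the sublinear map [v |-> |v^+|]);
   order continuity then gives [|x_a e| -> 0].  As [e] is a weak order unit and
   [E] is Archimedean, [(u - n e)^+] decreases to 0, so [|(u - n e)^+| -> 0].
   Writing [u = (u /\ N e) + (u - N e)^+] yields
   [|x_a u| <= N |x_a e| + |x_a| |(u - N e)^+|], hence [x_a u -> 0] in norm,
   a fortiori weakly.  The converse is the case [u = e]. *)

Section HahnBanach.
Variables (R : realType) (V : lmodType R) (p : V -> R).
Hypothesis p_subadd : forall x y, p (x + y) <= p x + p y.
Hypothesis p_homo : forall (t : R) x, 0 < t -> p (t *: x) = t * p x.
Variables (w : V) (fw : R).
Hypothesis w_neq0 : w != 0.
Hypothesis fw_le : forall t : R, t * fw <= p (t *: w).

Local Open Scope classical_set_scope.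

Definition graph_linear (G : set (V * R)) := forall (k : R) z1 z2, G z1 -> G z2 ->
  G (k *: z1.1 + z2.1, k * z1.2 + z2.2).
Definition graph_functional (G : set (V * R)) :=
  forall x a b, G (x, a) -> G (x, b) -> a = b.
Definition graph_dominated (G : set (V * R)) := forall x a, G (x, a) -> a <= p x.

(* Only nonempty graphs are required to contain [(w, fw)], so that the union
   of the empty chain is admissible, as Zorn_bigcup requires. *)
Definition admissible (G : set (V * R)) :=
  [/\ graph_linear G, graph_functional G, graph_dominated G
    & forall z, G z -> G (w, fw)].

Lemma admissible_bigcup (F : set (set (V * R))) :
  F `<=` admissible -> total_on F subset -> admissible (\bigcup_(X in F) X).
Proof.
move=> FA tot; split.
- move=> k z1 z2 [X1 FX1 X1z] [X2 FX2 X2z].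
  have [s12|s21] := tot _ _ FX1 FX2.
    by exists X2 => //; case: (FA _ FX2) => lin _ _ _; apply: lin => //; exact: s12.
  by exists X1 => //; case: (FA _ FX1) => lin _ _ _; apply: lin => //; exact: s21.
- move=> x a b [X1 FX1 X1z] [X2 FX2 X2z].
  have [s12|s21] := tot _ _ FX1 FX2.
    by case: (FA _ FX2) => _ fun2 _ _; exact: fun2 x a b (s12 _ X1z) X2z.
  by case: (FA _ FX1) => _ fun1 _ _; exact: fun1 x a b X1z (s21 _ X2z).
- by move=> x a [X FX Xz]; case: (FA _ FX) => _ _ dom _; exact: dom.
- by move=> z [X FX Xz]; exists X => //; case: (FA _ FX) => _ _ _ Xw; exact: Xw Xz.
Qed.

Lemma admissible_line : admissible [set z | exists t : R, z = (t *: w, t * fw)].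
Proof.
split.
- move=> k z1 z2 [t1 ->] [t2 ->]; exists (k * t1 + t2).
  by rewrite /= scalerDl scalerA mulrDl mulrA.
- move=> x a b [t1 [-> ->]] [t2 [/eqP e12 ->]].
  move: e12; rewrite -subr_eq0 -scalerBl scaler_eq0 (negbTE w_neq0) orbF.
  by rewrite subr_eq0 => /eqP ->.
- by move=> x a [t [-> ->]]; exact: fw_le.
- by move=> z _; exists 1; rewrite scale1r mul1r.
Qed.

Section Extension.
Variables (A : set (V * R)) (x0 : V).
Hypotheses (A_adm : admissible A) (A_neq0 : A !=set0).
Hypothesis x0_dom : ~ exists a, A (x0, a).

Lemma admissible00 z : A z -> A (0, 0).
Proof.
case: A_adm => lin _ _ _ Az.
by have := lin (-1) _ _ Az Az; rewrite scaleN1r mulN1r !addNr.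
Qed.

(* The admissible values at [x0] of an extension form the interval
   [sup (a - p (y - x0)), inf (p (z + x0) - b)], nonempty by subadditivity. *)
Lemma extension_value : exists c : R,
  (forall y a, A (y, a) -> a - p (y - x0) <= c) /\
  (forall z b, A (z, b) -> c <= p (z + x0) - b).
Proof.
case: A_adm => lin _ dom _.
have sep y a z b : A (y, a) -> A (z, b) -> a - p (y - x0) <= p (z + x0) - b.
  move=> Aya Azb; have := dom _ _ (lin 1 _ _ Aya Azb); rewrite /= scale1r mul1r.
  have := p_subadd (y - x0) (z + x0); rewrite addrACA addNr addr0; lra.
set S := [set r | exists y a, A (y, a) /\ r = a - p (y - x0)].
have [z0 /admissible00 A00] := A_neq0.
have S0 : S !=set0 by exists (0 - p (0 - x0)), 0, 0.
have Sub : has_ubound S by exists (p (0 + x0) - 0) => _ [y [a [Aya ->]]]; exact: sep.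
exists (sup S); split=> [y a Aya|z b Azb]; first by apply: ub_le_sup => //; exists y, a.
by apply: ge_sup => // _ [y [a [Aya ->]]]; exact: sep.
Qed.

Variable c : R.
Hypothesis c_lb : forall y a, A (y, a) -> a - p (y - x0) <= c.
Hypothesis c_ub : forall z b, A (z, b) -> c <= p (z + x0) - b.

Definition extension := [set z | exists y a (t : R), A (y, a) /\ z = (y + t *: x0, a + t * c)].

Lemma extension_functional : graph_functional extension.
Proof.
case: A_adm => lin Afun _ _.
move=> x a b [y1 [a1 [t1 [A1 [e1 ->]]]]] [y2 [a2 [t2 [A2 [e2 ->]]]]].
have [t12|t12] := eqVneq t1 t2.
  subst t2; move: e2; rewrite e1 => /addIr y12.
  by rewrite y12 in A1; rewrite (Afun _ _ _ A1 A2).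
exfalso; apply: x0_dom; exists ((t1 - t2)^-1 * (a2 - a1)).
have -> : x0 = (t1 - t2)^-1 *: (y2 - y1).
  apply: (@scalerI _ _ (t1 - t2)); first by rewrite subr_eq0.
  rewrite scalerA divff ?subr_eq0 // scale1r scalerBl.
  have e12 : y1 + t1 *: x0 = y2 + t2 *: x0 by rewrite -e1 -e2.
  by rewrite -[y2](addrK (t2 *: x0)) -e12 addrAC [y1 + _]addrC addrK.
have := lin ((t1 - t2)^-1) _ _ (lin (-1) _ _ A1 A2) (admissible00 A1).
by rewrite /= scaleN1r mulN1r !addr0 [- y1 + _]addrC [- a1 + _]addrC.
Qed.

Lemma extension_dominated : graph_dominated extension.
Proof.
case: A_adm => lin _ dom _ x a [y [b [t [Ayb [-> ->]]]]].
have [t0|t0|->] := ltgtP t 0; last by rewrite scale0r mul0r !addr0; exact: dom.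
- have s0 : 0 < - t by rewrite oppr_gt0.
  have := c_lb (lin (- t)^-1 _ _ Ayb (admissible00 Ayb)); rewrite /= !addr0.
  rewrite -(ler_pM2l s0) mulrBr mulrA divff ?gt_eqF // mul1r -p_homo //.
  rewrite scalerBr scalerA divff ?gt_eqF // scale1r scaleNr opprK; lra.
- have := c_ub (lin t^-1 _ _ Ayb (admissible00 Ayb)); rewrite /= !addr0.
  rewrite -(ler_pM2l t0) mulrBr mulrA divff ?gt_eqF // mul1r -p_homo //.
  rewrite scalerDr scalerA divff ?gt_eqF // scale1r; lra.
Qed.

Lemma admissible_extension : admissible extension.
Proof.
case: A_adm => lin _ _ Aw; split.
- move=> k _ _ [y1 [a1 [t1 [A1 ->]]]] [y2 [a2 [t2 [A2 ->]]]].
  exists (k *: y1 + y2), (k * a1 + a2), (k * t1 + t2).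
  split; first exact: (lin k _ _ A1 A2).
  rewrite /= scalerDr scalerDl scalerA mulrDr mulrDl mulrA.
  by rewrite [in LHS]addrACA [X in (_, X)]addrACA.
- exact: extension_functional.
- exact: extension_dominated.
- move=> _ [y [a [t [Aya _]]]]; exists w, fw, 0.
  by rewrite scale0r mul0r !addr0; split => //; exact: Aw Aya.
Qed.

Lemma extension_proper : A `<` extension.
Proof.
split; first by move=> [y a] Aya; exists y, a, 0; rewrite scale0r mul0r !addr0.
move=> sub; apply: x0_dom; exists c; apply: sub; exists 0, 0, 1.
have [z /admissible00 A00] := A_neq0.
by rewrite scale1r mul1r !add0r.
Qed.

End Extension.

Lemma maximal_admissible_total (A : set (V * R)) : admissible A ->
  (forall B, A `<` B -> ~ admissible B) -> forall x, exists a, A (x, a).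
Proof.
move=> A_adm Amax x0; apply: contrapT => x0_dom.
have [A_neq0|A0] := pselect (A !=set0); last first.
  apply: Amax admissible_line; split; first by move=> z Az; exfalso; apply: A0; exists z.
  by move=> sub; apply: A0; exists (1 *: w, 1 * fw); apply: sub; exists 1.
have [c [c_lb c_ub]] := extension_value x0 A_adm A_neq0.
apply: Amax (admissible_extension A_adm x0_dom c_lb c_ub).
exact: extension_proper A_adm A_neq0 x0_dom c.
Qed.

Theorem hahn_banach : exists f : V -> R,
  [/\ forall (a : R) x y, f (a *: x + y) = a * f x + f y,
      forall x, f x <= p x & f w = fw].
Proof.
have [A [A_adm Amax]] := Zorn_bigcup admissible_bigcup.
have [f Af] := choice (maximal_admissible_total A_adm Amax).
case: A_adm => lin Afun dom Aw.
exists f; split.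
- by move=> a x y; apply: Afun (Af _) _; exact: lin a _ _ (Af x) (Af y).
- by move=> x; exact: dom (Af x).
- by apply: Afun (Af w) _; exact: Aw (Af w).
Qed.

End HahnBanach.

Lemma nat_directed : directed (fun m n : nat => (m <= n)%N).
Proof.
split=> [|||m n]; [exact: inhabits 0%N|exact: leqnn|move=> ? ? ?; exact: leq_trans|].
by exists (maxn m n); rewrite leq_maxl leq_maxr.
Qed.

Section LinearForms.
Variables (R : realType) (E : completeNormedModType R).

Definition linear_form (f : E -> R) :=
  forall (a : R) (y z : E), f (a *: y + z) = a * f y + f z.

Variable f : E -> R.
Hypothesis f_lin : linear_form f.

Lemma linear_form0 : f 0 = 0.
Proof. by have := f_lin 1 0 0; rewrite scale1r addr0 mul1r; lra. Qed.

Lemma linear_formB x y : f (x - y) = f x - f y.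
Proof. by have := f_lin (-1) y x; rewrite scaleN1r mulN1r addrC => ->; rewrite addrC. Qed.

Lemma linear_formN x : f (- x) = - f x.
Proof. by rewrite -sub0r linear_formB linear_form0 sub0r. Qed.

Lemma linear_form_small : continuous f ->
  forall eps : R, 0 < eps -> exists2 d : R, 0 < d & forall v, `|v| < d -> `|f v| < eps.
Proof.
move=> f_cont eps eps0; have /cvgrPdist_lt /(_ eps eps0) := f_cont 0.
rewrite linear_form0 => /nbhs_norm0P [d d0 hd]; exists d => // v vd.
by have := hd v vd; rewrite /= sub0r normrN.
Qed.

End LinearForms.

Lemma norm_cvg0_weak_cvg0 (R : realType) (E : completeNormedModType R)
    (A : Type) (leA : A -> A -> Prop) (x : A -> E) :
  net_cvg leA (fun a => `|x a|) 0 -> weak_cvg leA x 0.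
Proof.
move=> x_cvg f f_lin f_cont eps eps0; have [d d0 fd] := linear_form_small f_lin f_cont eps0.
have [a0 xd] := x_cvg d d0; exists a0 => a /xd; rewrite linear_form0 // !subr0 normr_id.
exact: fd.
Qed.

Lemma mul_lt_half (R : realFieldType) (k t eps : R) :
  0 <= k -> 0 <= t -> t < eps / 2 / (k + 1) -> k * t < eps / 2.
Proof.
move=> k0 t0; rewrite ltr_pdivlMr ?ltr_wpDl // => lt_eps.
by apply: le_lt_trans lt_eps; rewrite mulrDr mulr1 mulrC lerDl.
Qed.

Section VectorLattice.
Variables (R : realType) (E : completeNormedModType R).
Variables (le : E -> E -> Prop) (join : E -> E -> E).
Hypothesis hVL : is_vector_lattice le join.
Local Notation meet := (meet join).
Local Notation labs := (labs join).

Lemma vl_le_refl x : le x x.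
Proof. by case: hVL => -[+ _] _ _ _; apply. Qed.

Lemma vl_le_anti x y : le x y -> le y x -> x = y.
Proof. by case: hVL => -[_ [+ _]] _ _ _; apply. Qed.

Lemma vl_le_trans x y z : le x y -> le y z -> le x z.
Proof. by case: hVL => -[_ [_ +]] _ _ _; apply. Qed.

Lemma vl_leD2r x y z : le x y -> le (x + z) (y + z).
Proof. by case: hVL => _ + _ _; apply. Qed.

Lemma vl_leD2l x y z : le x y -> le (z + x) (z + y).
Proof. by move=> /(vl_leD2r z); rewrite ![_ + z]addrC. Qed.

Lemma vl_leD x y z t : le x y -> le z t -> le (x + z) (y + t).
Proof. by move=> /(vl_leD2r z) + /(vl_leD2l y); exact: vl_le_trans. Qed.

Lemma vl_leN2 x y : le x y -> le (- y) (- x).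
Proof. by move=> /(vl_leD2r (- x - y)); rewrite addrA addrN add0r addrCA addrN addr0. Qed.

Lemma vl_leN2K x y : le (- y) (- x) -> le x y.
Proof. by move=> /vl_leN2; rewrite !opprK. Qed.

Lemma vl_subr_ge0 x y : le 0 (y - x) <-> le x y.
Proof.
split=> [/(vl_leD2r x)|/(vl_leD2r (- x))]; first by rewrite add0r addrNK.
by rewrite addrN.
Qed.

Lemma vl_leBDr x y z : le x (y - z) <-> le (x + z) y.
Proof.
split=> [/(vl_leD2r z)|/(vl_leD2r (- z))]; first by rewrite addrNK.
by rewrite addrK.
Qed.

Lemma vl_leZ2l (a : R) x y : 0 <= a -> le x y -> le (a *: x) (a *: y).
Proof. by case: hVL => _ _ + _; apply. Qed.

Lemma vl_scale_ge0 (a : R) x : 0 <= a -> le 0 x -> le 0 (a *: x).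
Proof. by move=> a0 /(vl_leZ2l a0); rewrite scaler0. Qed.

Lemma vl_leZ2r (a b : R) x : a <= b -> le 0 x -> le (a *: x) (b *: x).
Proof.
by move=> ab x0; apply/vl_subr_ge0; rewrite -scalerBl; apply: vl_scale_ge0; rewrite ?subr_ge0.
Qed.

Lemma vl_join_ubl x y : le x (join x y).
Proof. by case: hVL => _ _ _ /(_ x y x) []. Qed.

Lemma vl_join_ubr x y : le y (join x y).
Proof. by case: hVL => _ _ _ /(_ x y x) []. Qed.

Lemma vl_join_lub x y z : le x z -> le y z -> le (join x y) z.
Proof. by case: hVL => _ _ _ /(_ x y z) []. Qed.

Lemma vl_joinC x y : join x y = join y x.
Proof. by apply: vl_le_anti; apply: vl_join_lub; exact: vl_join_ubr || exact: vl_join_ubl. Qed.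

Lemma vl_join_mono x x' y y' : le x x' -> le y y' -> le (join x y) (join x' y').
Proof.
move=> xx' yy'; apply: vl_join_lub.
  exact: vl_le_trans xx' (vl_join_ubl _ _).
exact: vl_le_trans yy' (vl_join_ubr _ _).
Qed.

Lemma vl_joinDl x y z : join x y + z = join (x + z) (y + z).
Proof.
apply: vl_le_anti; last first.
  by apply: vl_join_lub; apply: vl_leD2r; [exact: vl_join_ubl|exact: vl_join_ubr].
by apply/vl_leBDr; apply: vl_join_lub; apply/vl_leBDr; [exact: vl_join_ubl|exact: vl_join_ubr].
Qed.

Lemma vl_joinZ (c : R) x y : 0 < c -> join (c *: x) (c *: y) = c *: join x y.
Proof.
move=> c0; have cV0 : 0 <= c^-1 by rewrite invr_ge0 ltW.
have scaleKV z : c *: (c^-1 *: z) = z by rewrite scalerA divff ?scale1r ?gt_eqF.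
have scaleVK z : c^-1 *: (c *: z) = z by rewrite scalerA mulVf ?scale1r ?gt_eqF.
apply: vl_le_anti.
  by apply: vl_join_lub; apply: vl_leZ2l (ltW c0) _; [exact: vl_join_ubl|exact: vl_join_ubr].
rewrite -[X in le _ X]scaleKV; apply: vl_leZ2l (ltW c0) _.
apply: vl_join_lub; [rewrite -{1}[x]scaleVK|rewrite -{1}[y]scaleVK]; apply: vl_leZ2l cV0 _.
  exact: vl_join_ubl.
exact: vl_join_ubr.
Qed.

Lemma vl_meet_lbl x y : le (meet x y) x.
Proof. by apply: vl_leN2K; rewrite opprK; exact: vl_join_ubl. Qed.

Lemma vl_meet_lbr x y : le (meet x y) y.
Proof. by apply: vl_leN2K; rewrite opprK; exact: vl_join_ubr. Qed.

Lemma vl_meet_glb x y z : le z x -> le z y -> le z (meet x y).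
Proof. by move=> zx zy; apply: vl_leN2K; rewrite opprK; apply: vl_join_lub; exact: vl_leN2. Qed.

Lemma vl_meetC x y : meet x y = meet y x.
Proof. by rewrite /Defs.meet vl_joinC. Qed.

Lemma vl_meet_mono x x' y y' : le x x' -> le y y' -> le (meet x y) (meet x' y').
Proof.
move=> xx' yy'; apply: vl_meet_glb.
  exact: vl_le_trans (vl_meet_lbl _ _) xx'.
exact: vl_le_trans (vl_meet_lbr _ _) yy'.
Qed.

Lemma vl_meetDl x y z : meet x y + z = meet (x + z) (y + z).
Proof. by rewrite /Defs.meet !opprD -vl_joinDl opprD opprK. Qed.

Lemma vl_meetZ (c : R) x y : 0 < c -> meet (c *: x) (c *: y) = c *: meet x y.
Proof. by move=> c0; rewrite /Defs.meet -!scalerN vl_joinZ // scalerN. Qed.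

Lemma vl_meet_ge0 x y : le 0 x -> le 0 y -> le 0 (meet x y).
Proof. exact: vl_meet_glb. Qed.

Lemma vl_meetxx x : meet x x = x.
Proof. by apply: vl_le_anti; [exact: vl_meet_lbl|apply: vl_meet_glb; exact: vl_le_refl]. Qed.

Lemma vl_meetx0 x : le 0 x -> meet x 0 = 0.
Proof.
by move=> x0; apply: vl_le_anti; [exact: vl_meet_lbr|apply: vl_meet_glb => //; exact: vl_le_refl].
Qed.

Lemma vl_subr_meet x y : x - meet x y = join 0 (x - y).
Proof. by rewrite /Defs.meet opprK addrC vl_joinDl addNr addrC. Qed.

Lemma vl_meet_pos_neg x : meet (join x 0) (join (- x) 0) = 0.
Proof.
have pos_neg : join x 0 - join (- x) 0 = x.
  by apply/eqP; rewrite subr_eq addrC vl_joinDl addNr add0r vl_joinC.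
have := vl_subr_meet (join x 0) (join (- x) 0).
by rewrite pos_neg vl_joinC => /eqP; rewrite subr_eq addrC -subr_eq subrr => /eqP <-.
Qed.

Lemma vl_labs_ge x : le x (labs x).
Proof. exact: vl_join_ubl. Qed.

Lemma vl_labs_geN x : le (- x) (labs x).
Proof. exact: vl_join_ubr. Qed.

Lemma vl_labs_ge0 x : le 0 (labs x).
Proof.
have := vl_leD (vl_labs_ge x) (vl_labs_geN x).
rewrite addrN -mulr2n -scaler_nat => /(vl_leZ2l (_ : 0 <= 2^-1)).
by rewrite scaler0 scalerA mulVf ?pnatr_eq0 // scale1r; apply; rewrite invr_ge0.
Qed.

Lemma vl_labs_id x : le 0 x -> labs x = x.
Proof.
move=> x0; apply: vl_le_anti (vl_labs_ge x); apply: vl_join_lub (vl_le_refl x) _.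
by apply: vl_le_trans (vl_leN2 x0) _; rewrite oppr0.
Qed.

Lemma vl_labs0 : labs 0 = 0.
Proof. exact/vl_labs_id/vl_le_refl. Qed.

Lemma vl_disjoint_le t x y : le 0 t -> le 0 y -> le y x -> meet t x = 0 -> meet t y = 0.
Proof.
move=> t0 y0 yx tx; apply: vl_le_anti; last exact: vl_meet_ge0.
by rewrite -tx; apply: vl_meet_mono (vl_le_refl t) yx.
Qed.

Lemma vl_disjointZ (c : R) x y : 0 <= c -> le 0 x -> le 0 y -> meet x y = 0 ->
  meet (c *: x) y = 0.
Proof.
move=> c0 x0 y0 xy; apply: vl_le_anti; last by apply: vl_meet_ge0 => //; exact: vl_scale_ge0.
have c1 : 0 < c + 1 by rewrite ltr_wpDl.
rewrite -(scaler0 _ (c + 1)) -xy -vl_meetZ //; apply: vl_meet_mono.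
  by apply: vl_leZ2r => //; rewrite lerDl.
by rewrite -{1}(scale1r y); apply: vl_leZ2r => //; rewrite lerDr.
Qed.

Lemma vl_meetD_le t x y : le 0 t -> le 0 x -> le 0 y ->
  le (meet t (x + y)) (meet t x + meet t y).
Proof.
move=> t0 x0 y0; set L := meet t (x + y); rewrite vl_meetDl; apply: vl_meet_glb.
  apply: vl_le_trans (vl_meet_lbl _ _) _; rewrite -{1}(addr0 t).
  exact: vl_leD2l (vl_meet_ge0 t0 y0).
have Lx : le (L - x) (meet t y).
  apply: vl_meet_glb.
    apply: vl_le_trans (vl_leD2r _ (vl_meet_lbl _ _)) _.
    by rewrite -{2}(addr0 t); apply: vl_leD2l; rewrite -oppr0; exact: vl_leN2.
  by have := vl_leD2r (- x) (vl_meet_lbr t (x + y)); rewrite addrAC addrN add0r.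
by move/(vl_leD2r x): Lx; rewrite addrNK addrC.
Qed.

Lemma vl_disjointD (c : R) t x y : 0 <= c -> le 0 t -> le 0 x -> le 0 y ->
  meet t x = 0 -> meet t y = 0 -> meet t (c *: x + y) = 0.
Proof.
move=> c0 t0 x0 y0 tx ty; apply: vl_le_anti; last first.
  by apply: vl_meet_ge0 => //; rewrite -(addr0 0); apply: vl_leD => //; exact: vl_scale_ge0.
apply: vl_le_trans (vl_meetD_le t0 (vl_scale_ge0 c0 x0) y0) _.
rewrite ty addr0 vl_meetC vl_disjointZ //; first exact: vl_le_refl.
by rewrite vl_meetC.
Qed.

Lemma vl_labs_scaleD (a : R) x y : le (labs (a *: x + y)) (`|a| *: labs x + labs y).
Proof.
have [ax axN] : le (a *: x) (`|a| *: labs x) /\ le (- (a *: x)) (`|a| *: labs x).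
  have [a0|a0] := leP 0 a.
    rewrite ger0_norm // -scalerN.
    by split; apply: vl_leZ2l a0 _; [exact: vl_labs_ge|exact: vl_labs_geN].
  have Na0 : 0 <= - a by rewrite oppr_ge0 ltW.
  rewrite ltr0_norm //; split; last by rewrite -scaleNr; apply: vl_leZ2l Na0 _; exact: vl_labs_ge.
  by rewrite -[a *: x]opprK -scalerN -scaleNr; apply: vl_leZ2l Na0 _; exact: vl_labs_geN.
apply: vl_join_lub; first by apply: vl_leD ax _; exact: vl_labs_ge.
by rewrite opprD; apply: vl_leD axN _; exact: vl_labs_geN.
Qed.

Lemma vl_disjoint_sup_pos t (D : set E) s : le 0 t ->
  (forall d, D d -> meet t (labs d) = 0) -> is_sup_of le D s -> meet t (join s 0) = 0.
Proof.
move=> t0 Dt [s_ub s_lub]; set sp := join s 0; set c := meet sp t.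
have c_ge0 : le 0 c by exact: vl_meet_ge0 (vl_join_ubr _ _) t0.
(* [sp - c] is an upper bound of [D] because every [d^+] is disjoint from [t]. *)
have ub d : D d -> le d (sp - c).
  move=> Dd; set dp := join d 0.
  have dpt : meet dp t = 0.
    rewrite vl_meetC; apply: vl_disjoint_le t0 (vl_join_ubr _ _) _ (Dt _ Dd).
    exact: vl_join_lub (vl_labs_ge _) (vl_labs_ge0 _).
  apply: vl_le_trans (vl_join_ubl d 0) _; rewrite -/dp -[dp]subr0 -dpt /c !vl_subr_meet.
  apply: vl_join_mono (vl_le_refl 0) _; apply: vl_leD2r.
  exact: vl_join_mono (s_ub _ Dd) (vl_le_refl 0).
have : le sp (sp - c).
  by apply: vl_join_lub (s_lub _ ub) _; apply/vl_subr_ge0; exact: vl_meet_lbl.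
move=> /(vl_leD2r (c - sp)); rewrite [sp + _]addrC addrNK addrA subrK subrr => c_le0.
by rewrite vl_meetC; apply: vl_le_anti c_le0 c_ge0.
Qed.

Lemma vl_disjoint_sup t (D : set E) s d0 : le 0 t -> D d0 ->
  (forall d, D d -> meet t (labs d) = 0) -> is_sup_of le D s -> meet t (labs s) = 0.
Proof.
move=> t0 Dd0 Dt sD.
have sn : meet t (join (- s) 0) = 0.
  apply: vl_disjoint_le t0 (vl_join_ubr _ _) _ (Dt _ Dd0).
  apply: vl_join_lub (vl_labs_ge0 _); apply: vl_le_trans (vl_labs_geN d0).
  exact/vl_leN2/sD.1.
apply: (vl_disjoint_le t0 (vl_labs_ge0 _) (_ : le _ (1 *: join s 0 + join (- s) 0))).
  rewrite scale1r; apply: vl_join_lub.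
    by rewrite -{1}(addr0 s); exact: vl_leD (vl_join_ubl _ _) (vl_join_ubr _ _).
  by rewrite -{1}(add0r (- s)); exact: vl_leD (vl_join_ubr _ _) (vl_join_ubl _ _).
apply: (vl_disjointD ler01 t0 (vl_join_ubr _ _) (vl_join_ubr _ _) _ sn).
exact: vl_disjoint_sup_pos t0 Dt sD.
Qed.

Section WeakOrderUnit.
Variable e : E.
Hypothesis he : weak_order_unit le join e.

(* The band {e}^dd; it is all of E because e is a weak order unit. *)
Definition bidisjoint (v : E) := forall t, le 0 t -> meet t e = 0 -> meet t (labs v) = 0.

Lemma bidisjoint_band : is_band le join bidisjoint.
Proof.
split.
- by move=> t t0 _; rewrite vl_labs0 vl_meetx0.
- move=> a x y Bx By t t0 te.
  apply: (vl_disjoint_le t0 (vl_labs_ge0 _) (vl_labs_scaleD a x y)).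
  exact: vl_disjointD (normr_ge0 a) t0 (vl_labs_ge0 x) (vl_labs_ge0 y) (Bx t t0 te) (By t t0 te).
- move=> x y yx Bx t t0 te.
  exact: vl_disjoint_le t0 (vl_labs_ge0 _) yx (Bx t t0 te).
- move=> D s DB sD t t0 te; have [[d0 Dd0]|nD] := pselect (exists d, D d).
    exact: vl_disjoint_sup t0 Dd0 (fun d Dd => DB d Dd t t0 te) sD.
  have : le s (s - e) by apply: sD.2 => d Dd; case: nD; exists d.
  move=> /vl_leBDr; rewrite addrC => /vl_leBDr; rewrite subrr => e_le0.
  by case: he => e0 [+ _]; case; apply: vl_le_anti.
Qed.

Lemma bidisjoint_e : bidisjoint e.
Proof. by case: he => e0 _ t _ te; rewrite vl_labs_id. Qed.

Lemma disjoint_weak_order_unit w : le 0 w -> meet w e = 0 -> w = 0.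
Proof.
move=> w0 we; have := he.2.2 _ bidisjoint_band bidisjoint_e w w w0 we.
by rewrite vl_labs_id // vl_meetxx.
Qed.

Hypothesis hArch : is_archimedean le.

Lemma pos_part_sub_nat_disjoint u w : le 0 u -> le 0 w ->
  (forall n : nat, le w (join (u - n%:R *: e) 0)) -> meet w e = 0.
Proof.
move=> u0 w0 wc; have e0 := he.1.
apply: hArch (u) (vl_meet_ge0 w0 e0) _ => n.
have [->|n0] := eqVneq n 0%N; first by rewrite scale0r.
have n_gt0 : (0 : R) < n%:R by rewrite ltr0n lt0n.
set A := join (n%:R *: e - u) 0.
have wA : meet w A = 0.
  have := vl_meet_pos_neg (u - n%:R *: e); rewrite opprB vl_meetC => h.
  by rewrite vl_meetC; exact: vl_disjoint_le (vl_join_ubr _ _) w0 (wc n) h.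
have neA : le (n%:R *: e) (A + u).
  by rewrite -{1}[n%:R *: e](subrK u); apply: vl_leD2r; exact: vl_join_ubl.
rewrite -vl_meetZ //; apply: vl_le_trans (vl_meet_mono (vl_le_refl _) neA) _.
rewrite -[n%:R *: w](subrK u) -vl_meetDl -[X in le _ X]add0r; apply: vl_leD2r.
rewrite -(vl_disjointZ (ler0n _ n) w0 (vl_join_ubr _ _) wA).
apply: vl_meet_mono (vl_le_refl _); rewrite -{2}(subr0 (n%:R *: w)).
exact/vl_leD2l/vl_leN2.
Qed.

Lemma pos_part_sub_nat_decr_to0 u : le 0 u ->
  net_decr_to_0 le (fun m n : nat => (m <= n)%N) (fun n => join (u - n%:R *: e) 0).
Proof.
move=> u0; split; [|split] => [m n mn|n|z zc].
- apply: vl_join_mono (vl_le_refl 0); apply/vl_leD2l/vl_leN2.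
  by apply: vl_leZ2r he.1; rewrite ler_nat.
- exact: vl_join_ubr.
- set w := join z 0; have w0 : le 0 w by exact: vl_join_ubr.
  have wc n : le w (join (u - n%:R *: e) 0) by exact: vl_join_lub (zc n) (vl_join_ubr _ _).
  have w_eq0 := disjoint_weak_order_unit w0 (pos_part_sub_nat_disjoint u0 w0 wc).
  by apply: vl_le_trans (vl_join_ubl z 0) _; rewrite -/w w_eq0; exact: vl_le_refl.
Qed.

End WeakOrderUnit.

Section NormedLattice.
Hypothesis lattice_norm : forall x y, le (labs x) (labs y) -> `|x| <= `|y|.

Lemma vl_norm_le x y : le 0 x -> le x y -> `|x| <= `|y|.
Proof.
move=> x0 xy; apply: lattice_norm.
by rewrite vl_labs_id // vl_labs_id //; exact: vl_le_trans xy.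
Qed.

Definition pos_part_norm (v : E) : R := `|join v 0|.

Lemma pos_part_normD x y : pos_part_norm (x + y) <= pos_part_norm x + pos_part_norm y.
Proof.
apply: le_trans (ler_normD _ _); apply: vl_norm_le; first exact: vl_join_ubr.
apply: vl_join_lub; first exact: vl_leD (vl_join_ubl _ _) (vl_join_ubl _ _).
by rewrite -[X in le X _](addr0 0); exact: vl_leD (vl_join_ubr _ _) (vl_join_ubr _ _).
Qed.

Lemma pos_part_normZ (t : R) x : 0 < t -> pos_part_norm (t *: x) = t * pos_part_norm x.
Proof. by move=> t0; rewrite /pos_part_norm -{1}(scaler0 _ t) vl_joinZ // normrZ gtr0_norm. Qed.

Lemma pos_part_norm_le x : pos_part_norm x <= `|x|.
Proof.
apply: lattice_norm; rewrite vl_labs_id; last exact: vl_join_ubr.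
exact: vl_join_lub (vl_labs_ge x) (vl_labs_ge0 x).
Qed.

Lemma pos_part_normN_le x : pos_part_norm (- x) <= `|x|.
Proof.
apply: lattice_norm; rewrite vl_labs_id; last exact: vl_join_ubr.
exact: vl_join_lub (vl_labs_geN x) (vl_labs_ge0 x).
Qed.

Lemma exists_positive_form w : le 0 w -> w != 0 -> exists f : E -> R,
  [/\ linear_form f, continuous f, f w = `|w| & forall v, le 0 v -> 0 <= f v].
Proof.
move=> w0 w_neq0.
have fw_le (t : R) : t * `|w| <= pos_part_norm (t *: w).
  have [t0|t0] := ltP 0 t; last exact: le_trans (mulr_le0_ge0 t0 (normr_ge0 _)) (normr_ge0 _).
  rewrite /pos_part_norm (_ : join (t *: w) 0 = t *: w) ?normrZ ?gtr0_norm //.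
  exact: vl_le_anti (vl_join_lub (vl_le_refl _) (vl_scale_ge0 (ltW t0) w0)) (vl_join_ubl _ _).
have [f [f_lin f_le fw]] := hahn_banach pos_part_normD pos_part_normZ w_neq0 fw_le.
have f_norm v : `|f v| <= `|v|.
  rewrite ler_norml (le_trans (f_le v) (pos_part_norm_le v)) andbT lerNl -linear_formN //.
  exact: le_trans (f_le _) (pos_part_normN_le v).
exists f; split => // [x|v v0].
  apply/cvgrPdist_lt => eps eps0; apply/nbhs_normP; exists eps => // y /= xy.
  by rewrite -linear_formB //; exact: le_lt_trans (f_norm _) xy.
rewrite -[f v]opprK -(linear_formN f_lin) oppr_ge0; apply: le_trans (f_le _) _.
rewrite /pos_part_norm (_ : join (- v) 0 = 0) ?normr0 //.
apply: vl_le_anti (vl_join_lub _ (vl_le_refl 0)) (vl_join_ubr _ _).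
by rewrite -oppr0; exact: vl_leN2.
Qed.

Lemma weak_cvg0_inf (A : Type) (leA : A -> A -> Prop) (y : A -> E) : directed leA ->
  (forall a, le 0 (y a)) -> weak_cvg leA y 0 -> forall z, (forall a, le z (y a)) -> le z 0.
Proof.
move=> [_ _ _ leA_dir] y0 y_cvg z zy; set w := join z 0.
suff w_eq0 : w = 0 by rewrite -w_eq0; exact: vl_join_ubl.
apply: contrapT => /eqP w_neq0; have w0 : le 0 w by exact: vl_join_ubr.
have [f [f_lin f_cont fw f_ge0]] := exists_positive_form w0 w_neq0.
have [a0 ya0] := y_cvg f f_lin f_cont `|w| ltac:(by rewrite normr_gt0).
have [a [a0a _]] := leA_dir a0 a0.
have wy : `|w| <= f (y a).
  rewrite -fw -subr_ge0 -linear_formB //; apply: f_ge0; apply/vl_subr_ge0.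
  exact: vl_join_lub (zy a) (y0 a).
have := ya0 a a0a; rewrite linear_form0 // subr0.
by move=> /(le_lt_trans (le_trans wy (ler_norm _))); rewrite ltxx.
Qed.

Section Product.
Variable mul : E -> E -> E.
Hypothesis hF : is_f_algebra le join mul.
Hypothesis mul_norm : forall x y, `|mul x y| <= `|x| * `|y|.

Lemma fa_mulZDl (a : R) x y z : mul (a *: x + y) z = a *: mul x z + mul y z.
Proof. by case: hF => _ + _ _ _; apply. Qed.

Lemma fa_mulZDr (a : R) x y z : mul z (a *: x + y) = a *: mul z x + mul z y.
Proof. by case: hF => _ _ + _ _; apply. Qed.

Lemma fa_mul_ge0 x y : le 0 x -> le 0 y -> le 0 (mul x y).
Proof. by case: hF => _ _ _ + _; apply. Qed.

Lemma fa_mulr0 z : mul z 0 = 0.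
Proof.
have := fa_mulZDr 1 0 0 z; rewrite !scale1r addr0 => zz.
by apply: (addrI (mul z 0)); rewrite addr0 -zz.
Qed.

Lemma fa_mulZr (a : R) x z : mul z (a *: x) = a *: mul z x.
Proof. by have := fa_mulZDr a x 0 z; rewrite !addr0 fa_mulr0 addr0. Qed.

Lemma fa_mulDr x y z : mul z (x + y) = mul z x + mul z y.
Proof. by have := fa_mulZDr 1 x y z; rewrite !scale1r. Qed.

Lemma fa_mulBr x y z : mul z (x - y) = mul z x - mul z y.
Proof. by have := fa_mulZDr (-1) y x z; rewrite !scaleN1r ![- _ + _]addrC. Qed.

Lemma fa_mulBl x y z : mul (x - y) z = mul x z - mul y z.
Proof. by have := fa_mulZDl (-1) y x z; rewrite !scaleN1r ![- _ + _]addrC. Qed.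

Lemma fa_ler_wpM2l x y z : le 0 z -> le x y -> le (mul z x) (mul z y).
Proof. by move=> z0 /vl_subr_ge0 xy; apply/vl_subr_ge0; rewrite -fa_mulBr; exact: fa_mul_ge0. Qed.

Lemma fa_ler_wpM2r x y z : le 0 z -> le x y -> le (mul x z) (mul y z).
Proof. by move=> z0 /vl_subr_ge0 xy; apply/vl_subr_ge0; rewrite -fa_mulBl; exact: fa_mul_ge0. Qed.

Lemma fa_norm_mul_le (N : nat) x u e : le 0 x -> le 0 u -> le 0 e ->
  `|mul x u| <= N%:R * `|mul x e| + `|x| * `|join (u - N%:R *: e) 0|.
Proof.
move=> x0 u0 e0; set m := meet u (N%:R *: e).
have u_split : u = m + join (u - N%:R *: e) 0.
  by rewrite [join _ 0]vl_joinC -vl_subr_meet addrC subrK.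
rewrite {1}u_split fa_mulDr; apply: le_trans (ler_normD _ _) _.
apply: lerD; last exact: mul_norm.
have -> : N%:R * `|mul x e| = `|mul x (N%:R *: e)| by rewrite fa_mulZr normrZ ger0_norm.
apply: vl_norm_le; last exact: fa_ler_wpM2l x0 (vl_meet_lbr _ _).
exact: fa_mul_ge0 x0 (vl_meet_ge0 u0 (vl_scale_ge0 (ler0n _ N) e0)).
Qed.

Lemma fa_mul_norm_cvg0 (A : Type) (leA : A -> A -> Prop) (x : A -> E) u e :
  directed leA -> (forall a, le 0 (x a)) -> decreasing_net le leA x -> le 0 u -> le 0 e ->
  net_cvg leA (fun a => `|mul (x a) e|) 0 ->
  net_cvg (fun m n : nat => (m <= n)%N) (fun n => `|join (u - n%:R *: e) 0|) 0 ->
  net_cvg leA (fun a => `|mul (x a) u|) 0.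
Proof.
move=> [[b] _ leA_trans leA_dir] x0 x_decr u0 e0 xe_cvg c_cvg eps eps0.
set K := `|x b|; have K0 : 0 <= K := normr_ge0 _.
have tol (k : R) : 0 <= k -> 0 < eps / 2 / (k + 1) by move=> k0; rewrite !divr_gt0 // ltr_wpDl.
have [N cN] := c_cvg _ (tol K K0).
have [a1 xe_small] := xe_cvg _ (tol N%:R (ler0n _ N)).
have [a2 [ba2 a1a2]] := leA_dir b a1.
exists a2 => a a2a; rewrite subr0 normr_id.
apply: le_lt_trans (fa_norm_mul_le N (x0 a) u0 e0) _; rewrite [eps]splitr.
have := cN N (leqnn N); have := xe_small a (leA_trans _ _ _ a1a2 a2a); rewrite !subr0 !normr_id.
move=> /(mul_lt_half (ler0n _ N) (normr_ge0 _)) xe_lt /(mul_lt_half K0 (normr_ge0 _)) c_lt.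
apply: ltrD xe_lt (le_lt_trans _ c_lt); apply: (ler_wpM2r (normr_ge0 _)).
exact: vl_norm_le (x0 a) (x_decr _ _ (leA_trans _ _ _ ba2 a2a)).
Qed.

End Product.
End NormedLattice.
End VectorLattice.

Theorem corollary2p10 (R : realType) (E : completeNormedModType R)
  (le : E -> E -> Prop) (join : E -> E -> E) (mul : E -> E -> E)
  (hE : BanachFAlgebra le join mul)
  (hoc : order_continuous_norm le)
  (e : E) (he : weak_order_unit le join e)
  (A : Type) (leA : A -> A -> Prop) (hA : directed leA)
  (x : A -> E) (hpos : forall a, le 0 (x a)) (hdec : decreasing_net le leA x) :
  mw_cvg le join mul leA x 0 <-> weak_cvg leA (fun a => mul (x a) e) 0.
Proof.
case: hE => hVL hArch hF hN hM; have e0 := he.1.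
have labs_x u : (fun a => mul (labs join (x a - 0)) u) = (fun a => mul (x a) u).
  by apply/funext => a; rewrite subr0 (vl_labs_id hVL (hpos a)).
split=> [/(_ e e0)|xe_cvg u u0]; rewrite labs_x //.
have xe_decr : net_decr_to_0 le leA (fun a => mul (x a) e).
  have xe0 a : le 0 (mul (x a) e) by apply: (fa_mul_ge0 hF (hpos a) e0).
  split=> [a b ab|]; first exact: (fa_ler_wpM2r hVL hF e0 (hdec a b ab)).
  by split=> //; apply: (weak_cvg0_inf hVL hN hA xe0 xe_cvg).
have xe_norm := hoc _ _ _ hA xe_decr.
have c_norm := hoc _ _ _ nat_directed (pos_part_sub_nat_decr_to0 hVL he hArch u0).
exact/norm_cvg0_weak_cvg0/(fa_mul_norm_cvg0 hVL hN hF hM hA hpos hdec u0 e0 xe_norm c_norm).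
Qed.
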